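(* Let $\mathsf V$ be a pseudovariety of semigroupoids containing $\mathsf{Sl}$, $A$ a finite-vertex graph, and $B$ a retract subgraph of $A$. Then, identifying $\overline{\Omega}_B\mathsf V$ with its image in $\overline{\Omega}_A\mathsf V$ under the (injective) continuous homomorphism induced by the inclusion $B\to A$, the set $\overline{\Omega}_B\mathsf V$ is open in $\overline{\Omega}_A\mathsf V$.
   Context: A graph has vertices, edges and source/range maps; finite-vertex means finitely many vertices. A pseudovariety of semigroupoids is a class of finite semigroupoids closed under divisors, finite direct products and finite coproducts; $\mathsf{Sl}$ is the pseudovariety of finite semilattices. $\overline{\Omega}_A\mathsf V$ denotes the free pro-$\mathsf V$ semigroupoid over the finite-vertex graph $A$. A subgraph $B$ of $A$ is a retract subgraph if there is an onto graph morphism $r\colon A\to B$ with $r\circ i=\mathrm{id}_B$, where $i\colon B\to A$ is the inclusion; then the induced continuous homomorphism $\overline{\Omega}_B\mathsf V\to\overline{\Omega}_A\mathsf V$ is injective. *)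

From mathcomp Require Import all_boot.
From mathcomp Require Import boolp classical_sets topology.

Set Implicit Arguments.
Unset Strict Implicit.
Unset Printing Implicit Defensive.

Local Open Scope classical_set_scope.

Record fvgraph := FVGraph {
  gV : finType;
  gE : Type;
  gsrc : gE -> gV;
  gtgt : gE -> gV }.

Definition graph_morph (A B : fvgraph) (f0 : gV A -> gV B) (f1 : gE A -> gE B) :=
  (forall e, gsrc (f1 e) = f0 (gsrc e)) /\ (forall e, gtgt (f1 e) = f0 (gtgt e)).

Definition subgraph_incl (B A : fvgraph) (i0 : gV B -> gV A) (i1 : gE B -> gE A) :=
  graph_morph i0 i1 /\ injective i0 /\ injective i1.

Definition retraction (B A : fvgraph) (i0 : gV B -> gV A) (i1 : gE B -> gE A)
  (r0 : gV A -> gV B) (r1 : gE A -> gE B) :=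
  [/\ graph_morph r0 r1, (forall v, exists u, r0 u = v), (forall e, exists d, r1 d = e),
      (forall v, r0 (i0 v) = v) & (forall e, r1 (i1 e) = e)].

(* Semigroupoids: objects O, arrows X, domain/codomain, and a composition
   [comp x y] (first x, then y), meaningful when [cod x = dom y].        *)
Record sgd_ops (O X : Type) := SgdOps {
  sdom : X -> O;
  scod : X -> O;
  scomp : X -> X -> X }.

Definition is_sgd (O X : Type) (s : sgd_ops O X) :=
  (forall x y, scod s x = sdom s y ->
     sdom s (scomp s x y) = sdom s x /\ scod s (scomp s x y) = scod s y) /\
  (forall x y z, scod s x = sdom s y -> scod s y = sdom s z ->
     scomp s (scomp s x y) z = scomp s x (scomp s y z)).

Definition is_hom (O1 X1 O2 X2 : Type) (s : sgd_ops O1 X1) (t : sgd_ops O2 X2)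
  (h0 : O1 -> O2) (h1 : X1 -> X2) :=
  [/\ (forall x, sdom t (h1 x) = h0 (sdom s x)),
      (forall x, scod t (h1 x) = h0 (scod s x)) &
      (forall x y, scod s x = sdom s y -> h1 (scomp s x y) = scomp t (h1 x) (h1 y))].

Record fsgd := FSgd {
  fO : finType;
  fX : finType;
  fops : sgd_ops fO fX;
  fax : is_sgd fops }.

Definition subsgd (T : fsgd) (PO : fO T -> Prop) (PX : fX T -> Prop) :=
  (forall x, PX x -> PO (sdom (fops T) x) /\ PO (scod (fops T) x)) /\
  (forall x y, PX x -> PX y -> scod (fops T) x = sdom (fops T) y ->
     PX (scomp (fops T) x y)).

(* S divides T: S is a quotient of a subsemigroupoid T' of T, a quotient
   being a morphism that is bijective on objects and surjective on arrows
   (hence on each hom-set). *)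
Definition divides (S T : fsgd) :=
  exists (PO : fO T -> Prop) (PX : fX T -> Prop) (q0 : fO T -> fO S) (q1 : fX T -> fX S),
  subsgd PO PX /\ (forall u v, PO u -> PO v -> q0 u = q0 v -> u = v) /\
  [/\ (forall x, PX x -> sdom (fops S) (q1 x) = q0 (sdom (fops T) x)),
      (forall x, PX x -> scod (fops S) (q1 x) = q0 (scod (fops T) x)),
      (forall x y, PX x -> PX y -> scod (fops T) x = sdom (fops T) y ->
          q1 (scomp (fops T) x y) = scomp (fops S) (q1 x) (q1 y)),
      (forall o, exists2 u, PO u & q0 u = o) &
      (forall s, exists2 x, PX x & q1 x = s)].

Definition is_product (U S T : fsgd) :=
  exists (p0 : fO U -> fO S) (p1 : fX U -> fX S) (q0 : fO U -> fO T) (q1 : fX U -> fX T),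
  [/\ is_hom (fops U) (fops S) p0 p1, is_hom (fops U) (fops T) q0 q1,
      bijective (fun u => (p0 u, q0 u)) & bijective (fun x => (p1 x, q1 x))].

Definition is_coproduct (U S T : fsgd) :=
  exists (a0 : fO S -> fO U) (a1 : fX S -> fX U) (b0 : fO T -> fO U) (b1 : fX T -> fX U),
  [/\ is_hom (fops S) (fops U) a0 a1, is_hom (fops T) (fops U) b0 b1,
      bijective (fun u : fO S + fO T => match u with inl o => a0 o | inr o => b0 o end) &
      bijective (fun u : fX S + fX T => match u with inl x => a1 x | inr x => b1 x end)].

Definition is_trivial_sgd (U : fsgd) := #|fO U| = 1 /\ #|fX U| = 1.
Definition is_empty_sgd (U : fsgd) := #|fO U| = 0.

(* Pseudovariety of semigroupoids: class of finite semigroupoids closed under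
   divisors, finite direct products and finite coproducts (the nullary
   product/coproduct being the trivial/empty semigroupoid). *)
Definition pseudovariety (V : fsgd -> Prop) :=
  [/\ (forall S T, V T -> divides S T -> V S),
      (forall U S T, V S -> V T -> is_product U S T -> V U),
      (forall U, is_trivial_sgd U -> V U),
      (forall U S T, V S -> V T -> is_coproduct U S T -> V U) &
      (forall U, is_empty_sgd U -> V U)].

(* Sl is contained in V: every finite semilattice, viewed as a one-vertex
   semigroupoid, belongs to V. *)
Definition contains_Sl (V : fsgd -> Prop) :=
  forall S : fsgd, #|fO S| = 1 ->
    (forall x y, scomp (fops S) x y = scomp (fops S) y x) ->
    (forall x, scomp (fops S) x x = x) -> V S.

Record tsgd := TSgd {
  tO : topologicalType;
  tX : topologicalType;
  tops : sgd_ops tO tX;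
  tax : is_sgd tops;
  tdom_cont : continuous (sdom tops);
  tcod_cont : continuous (scod tops);
  tcomp_cont : {within [set p : tX * tX | scod tops p.1 = sdom tops p.2],
                 continuous (fun p : tX * tX => scomp tops p.1 p.2)} }.

Definition cont_hom (S T : tsgd) (h0 : tO S -> tO T) (h1 : tX S -> tX T) :=
  [/\ is_hom (tops S) (tops T) h0 h1, continuous h0 & continuous h1].

(* continuous homomorphism into a finite (discrete) semigroupoid *)
Definition cont_hom_fin (S : tsgd) (T : fsgd) (h0 : tO S -> fO T) (h1 : tX S -> fX T) :=
  [/\ is_hom (tops S) (fops T) h0 h1,
      (forall o, open (h0 @^-1` [set o])) &
      (forall x, open (h1 @^-1` [set x]))].

Definition proV (V : fsgd -> Prop) (S : tsgd) :=
  [/\ compact [set: tO S], compact [set: tX S],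
      hausdorff_space (tO S) /\ hausdorff_space (tX S),
      (forall u v : tO S, u <> v -> exists T : fsgd, V T /\
         exists h0 h1, cont_hom_fin (T := T) h0 h1 /\ h0 u <> h0 v) &
      (forall x y : tX S, x <> y -> exists T : fsgd, V T /\
         exists h0 h1, cont_hom_fin (T := T) h0 h1 /\ h1 x <> h1 y)].

Definition graph_to_sgd (A : fvgraph) (S : tsgd) (g0 : gV A -> tO S) (g1 : gE A -> tX S) :=
  (forall e, sdom (tops S) (g1 e) = g0 (gsrc e)) /\
  (forall e, scod (tops S) (g1 e) = g0 (gtgt e)).

Definition free_proV (V : fsgd -> Prop) (A : fvgraph) (F : tsgd)
  (iota0 : gV A -> tO F) (iota1 : gE A -> tX F) :=
  [/\ proV V F, graph_to_sgd iota0 iota1 &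
      forall (S : tsgd) (g0 : gV A -> tO S) (g1 : gE A -> tX S),
        proV V S -> graph_to_sgd g0 g1 ->
        (exists h0 h1, [/\ cont_hom h0 h1,
             (forall v, h0 (iota0 v) = g0 v) & (forall e, h1 (iota1 e) = g1 e)]) /\
        (forall h0 h1 k0 k1, cont_hom h0 h1 -> cont_hom k0 k1 ->
             (forall v, h0 (iota0 v) = g0 v) -> (forall e, h1 (iota1 e) = g1 e) ->
             (forall v, k0 (iota0 v) = g0 v) -> (forall e, k1 (iota1 e) = g1 e) ->
             h0 = k0 /\ h1 = k1)].

From mathcomp Require Import all_boot.
From mathcomp Require Import boolp classical_sets functions topology.

Set Implicit Arguments.
Unset Strict Implicit.
Unset Printing Implicit Defensive.

Local Open Scope classical_set_scope.

(* Let c : Ω_A V -> {0,1} be the continuous homomorphism into the two-element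
   semilattice (a member of Sl, hence of V) sending the edges of A outside B to 1
   and those of B to 0, and let p : Ω_A V -> Ω_B V extend the retraction.  Then
   Ω_B V = c^-1(0), an open set: c vanishes on Ω_B V by freeness, and
   conversely the x with c x = 1 or x = h (p x) form a closed subsemigroupoid (as
   c^-1(1) is an ideal) containing the generators, hence all of Ω_A V. *)

Lemma discrete_continuous (X : discreteTopologicalType) (Y : topologicalType)
    (f : X -> Y) :
  continuous f.
Proof.
move=> x P fxP; apply: filterS (discrete_set1 x) => _ ->; exact: nbhs_singleton fxP.
Qed.

Lemma discrete_prod_continuous (X Y : discreteTopologicalType)
    (Z : topologicalType) (f : X * Y -> Z) :
  continuous f.
Proof.
move=> [x y] P fxyP; exists ([set x], [set y]); first by split; exact: discrete_set1.
by move=> [_ _] [/= -> ->]; exact: nbhs_singleton fxyP.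
Qed.

Lemma continuous_pair_map (X Y X' Y' : topologicalType) (f : X -> X') (g : Y -> Y') :
  continuous f -> continuous g -> continuous (fun p : X * Y => (f p.1, g p.2)).
Proof.
move=> cf cg [x y]; apply: cvg_pair.
- exact: continuous_comp cvg_fst (cf _).
- exact: continuous_comp cvg_snd (cg _).
Qed.

Lemma within_comp_continuous (U V W : topologicalType) (A : set U) (B : set V)
    (f : U -> V) (g : V -> W) :
  {homo f : x / A x >-> B x} -> continuous f -> {within B, continuous g} ->
  {within A, continuous (g \o f)}.
Proof.
move=> fAB cf /subspace_continuousP cg; apply/subspace_continuousP => x Ax P gfxP.
have := cg _ (fAB _ Ax) _ gfxP; rewrite /= /within => /cf; rewrite nbhs_simpl /=.
by apply: filterS => y gfyP Ay; exact: gfyP (fAB _ Ay).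
Qed.

Lemma closed_fixed_points (T : topologicalType) (g : T -> T) :
  hausdorff_space T -> continuous g -> closed [set x | x = g x].
Proof.
move=> hT cg p clp; apply: hT => P Q pP pQ.
have [x [/= fixx [Px Qgx]]] := clp _ (filterI pP (cg _ _ pQ)).
by exists x; split => //; rewrite fixx.
Qed.

Lemma cont_hom_id (S : tsgd) : @cont_hom S S id id.
Proof. by split=> // x; exact: cvg_id. Qed.

Lemma cont_hom_comp (S T U : tsgd) f0 f1 g0 g1 :
  @cont_hom S T f0 f1 -> @cont_hom T U g0 g1 -> @cont_hom S U (g0 \o f0) (g1 \o f1).
Proof.
case=> [[fd fc fm] cf0 cf1] [[gd gc gm] cg0 cg1]; split.
- split=> [x|x|x y xy] /=; [by rewrite gd fd | by rewrite gc fc |].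
  by rewrite fm // gm // fc fd xy.
- by move=> x; exact: continuous_comp (cf0 x) (cg0 _).
- by move=> x; exact: continuous_comp (cf1 x) (cg1 _).
Qed.

Definition or_ops : sgd_ops unit bool := SgdOps (fun _ => tt) (fun _ => tt) orb.

Lemma or_sgd : is_sgd or_ops.
Proof. by split=> // x y z _ _; rewrite /= orbA. Qed.

Definition bool_or : tsgd := @TSgd (discrete_topology unit) bool or_ops or_sgd
  (@discrete_continuous _ _ _) (@discrete_continuous _ _ _)
  (continuous_subspaceT (@discrete_prod_continuous _ _ _ _)).

Definition bool_or_fin : fsgd := @FSgd unit bool or_ops or_sgd.

Lemma proV_bool_or V : contains_Sl V -> proV V bool_or.
Proof.
move=> VSl; split.
- rewrite (_ : setT = [set tt]); first exact: compact_set1.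
  by apply/seteqP; split=> // -[].
- exact: bool_compact.
- by split; exact: discrete_hausdorff.
- by move=> [] [].
- move=> x y xy; exists bool_or_fin; split.
    by apply: VSl => //=; [rewrite card_unit | exact: orbC | exact: orbb].
  exists id, id; split=> //; split=> // ?; exact: discrete_open.
Qed.

Lemma cont_hom_false (S : tsgd) :
  @cont_hom S bool_or (fun _ => tt) (fun _ => false).
Proof. by split; [by [] | move=> x; exact: cvg_cst..]. Qed.

Definition comp_closed (S : tsgd) (K : set (tX S)) :=
  forall x y, K x -> K y -> scod (tops S) x = sdom (tops S) y -> K (scomp (tops S) x y).

Section ClosedSubsemigroupoid.
Variables (S : tsgd) (K : set (tX S)).
Hypothesis compK : comp_closed K.

Local Notation W := (set_type K).

(* The value on non-composable pairs is junk. *)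
Definition sub_comp (a b : W) : W :=
  match pselect (scod (tops S) (val a) = sdom (tops S) (val b)) with
  | left ab => SigSub (mem_set (compK (set_valP a) (set_valP b) ab))
  | right _ => a
  end.

Lemma sub_compE a b : scod (tops S) (val a) = sdom (tops S) (val b) ->
  val (sub_comp a b) = scomp (tops S) (val a) (val b).
Proof. by rewrite /sub_comp; case: pselect. Qed.

Definition sub_ops : sgd_ops (tO S) W :=
  SgdOps (fun a => sdom (tops S) (val a)) (fun a => scod (tops S) (val a)) sub_comp.

Lemma sub_sgd : is_sgd sub_ops.
Proof.
have [dom_cod assoc] := tax S.
split=> [x y /= xy | x y z /= xy yz]; first by rewrite sub_compE //; exact: dom_cod.
have xy_z : scod (tops S) (val (sub_comp x y)) = sdom (tops S) (val z).
  by rewrite sub_compE // (dom_cod _ _ xy).2.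
have x_yz : scod (tops S) (val x) = sdom (tops S) (val (sub_comp y z)).
  by rewrite sub_compE // (dom_cod _ _ yz).1.
by apply: val_inj; rewrite sub_compE // sub_compE // sub_compE // sub_compE //; exact: assoc.
Qed.

Lemma val_continuous : continuous (val : W -> tX S).
Proof. exact: initial_continuous. Qed.

Lemma sub_dom_continuous : continuous (sdom sub_ops).
Proof. by move=> x; apply: continuous_comp; [exact: val_continuous | exact: tdom_cont]. Qed.

Lemma sub_cod_continuous : continuous (scod sub_ops).
Proof. by move=> x; apply: continuous_comp; [exact: val_continuous | exact: tcod_cont]. Qed.

Lemma sub_comp_continuous :
  {within [set p : W * W | scod sub_ops p.1 = sdom sub_ops p.2],
    continuous (fun p : W * W => scomp sub_ops p.1 p.2)}.
Proof.
apply: (@continuous_comp_initial _ _ _ (@set_val _ K)).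
apply: (@subspace_eq_continuous _ _ _
  ((fun p => scomp (tops S) p.1 p.2) \o (fun p : W * W => (val p.1, val p.2)))).
  by move=> p /set_mem /= p12; symmetry; exact: sub_compE.
apply: within_comp_continuous; last exact: tcomp_cont.
  by move=> p.
exact: continuous_pair_map val_continuous val_continuous.
Qed.

Definition sub_tsgd : tsgd := @TSgd (tO S) W sub_ops sub_sgd
  sub_dom_continuous sub_cod_continuous sub_comp_continuous.

Lemma cont_hom_val : @cont_hom sub_tsgd S id val.
Proof.
split; last exact: val_continuous; last by move=> x; exact: cvg_id.
by split=> // x y; exact: sub_compE.
Qed.

Lemma cont_hom_fin_val (T : fsgd) h0 h1 :
  @cont_hom_fin S T h0 h1 -> @cont_hom_fin sub_tsgd T h0 (h1 \o val).
Proof.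
case=> [[h_dom h_cod h_comp] open0 open1]; split=> //.
  split=> [x|x|x y xy] /=; [exact: h_dom | exact: h_cod | by rewrite sub_compE // h_comp].
by move=> x; exact: (continuousP _).1 val_continuous _ (open1 x).
Qed.

Hypothesis closedK : closed K.

Lemma sub_compact : compact [set: tX S] -> compact [set: W].
Proof.
move=> cS F PF _.
have cK : compact K by apply: subclosed_compact closedK cS _.
have FK : (set_val @ F) K.
  by rewrite /= /fmap /=; apply: filterS filterT => w _; exact: set_valP.
have [x [Kx clx]] := cK _ (fmap_proper_filter _ PF) FK.
exists (SigSub (mem_set Kx)); split=> // P Q FP.
rewrite nbhsE => -[_ [[O oO <-] Ox OQ]].
have FvalP : (set_val @ F) (set_val @` P).
  by rewrite /= /fmap /=; apply: filterS FP => a Pa; exists a.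
have [_ [[a Pa <-] Oa]] := clx _ _ FvalP (open_nbhs_nbhs (conj oO Ox)).
by exists a; split=> //; exact: OQ.
Qed.

Lemma sub_hausdorff : hausdorff_space (tX S) -> hausdorff_space W.
Proof.
move=> hS p q pq; apply/val_inj/hS => P Q pP qQ.
have [z [Pz Qz]] := pq _ _ (val_continuous pP) (val_continuous qQ).
by exists (val z).
Qed.

Lemma proV_sub V : proV V S -> proV V sub_tsgd.
Proof.
case=> cO cX [hO hX] sepO sepX; split=> //.
- exact: sub_compact.
- by split=> //; exact: sub_hausdorff.
- move=> u v /sepO [T [VT [h0 [h1 [ch sep]]]]].
  by exists T; split=> //; exists h0, (h1 \o val); split=> //; exact: cont_hom_fin_val.
- move=> x y xy; have /sepX [T [VT [h0 [h1 [ch sep]]]]] : val x <> val y.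
    by move=> /val_inj.
  by exists T; split=> //; exists h0, (h1 \o val); split=> //; exact: cont_hom_fin_val.
Qed.

End ClosedSubsemigroupoid.

Section FreeProV.
Variables (V : fsgd -> Prop) (A : fvgraph) (F : tsgd)
  (iota0 : gV A -> tO F) (iota1 : gE A -> tX F).
Hypothesis freeF : free_proV V iota0 iota1.

Lemma free_proV_lift (S : tsgd) g0 g1 : proV V S -> graph_to_sgd g0 g1 ->
  exists h0 h1, [/\ @cont_hom F S h0 h1,
    forall v, h0 (iota0 v) = g0 v & forall e, h1 (iota1 e) = g1 e].
Proof. by case: freeF => _ _ univ pS gS; case: (univ _ _ _ pS gS). Qed.

Lemma free_proV_hom_eq (S : tsgd) f0 f1 g0 g1 : proV V S ->
  @cont_hom F S f0 f1 -> @cont_hom F S g0 g1 ->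
  (forall v, f0 (iota0 v) = g0 (iota0 v)) -> (forall e, f1 (iota1 e) = g1 (iota1 e)) ->
  f1 = g1.
Proof.
case: freeF => _ [iota_dom iota_cod] univ pS cf cg fg0 fg1.
have gS : graph_to_sgd (f0 \o iota0) (f1 \o iota1).
  case: cf => [[f_dom f_cod _] _ _].
  by split=> e /=; rewrite ?f_dom ?f_cod ?iota_dom ?iota_cod.
have [_ uniq] := univ _ _ _ pS gS.
by have [] := uniq _ _ _ _ cf cg (fun=> erefl) (fun=> erefl) (fun v => esym (fg0 v))
  (fun e => esym (fg1 e)).
Qed.

Lemma free_proV_closed_subsgdT (K : set (tX F)) :
  closed K -> comp_closed K -> (forall e, K (iota1 e)) -> K = setT.
Proof.
move=> closedK compK gensK; have [pF [iota_dom iota_cod] _] := freeF.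
have gK : graph_to_sgd (S := sub_tsgd compK) iota0
    (fun e => SigSub (mem_set (gensK e))).
  by split=> e /=; [exact: iota_dom | exact: iota_cod].
have [k0 [k1 [ck k0E k1E]]] := free_proV_lift (proV_sub compK closedK pF) gK.
have idE : id = val \o k1.
  apply: free_proV_hom_eq pF (cont_hom_id F) (cont_hom_comp ck (cont_hom_val compK)) _ _.
    by move=> v; rewrite /= k0E.
  by move=> e; rewrite /= k1E.
by apply/seteqP; split=> // x _; rewrite (congr1 (fun f => f x) idE); exact: set_valP.
Qed.

Lemma range_eq_preimage_content (S : tsgd) h0 h1 p0 p1 c0 c1 :
  @cont_hom S F h0 h1 -> @cont_hom F S p0 p1 -> @cont_hom F bool_or c0 c1 ->
  (forall y, c1 (h1 y) = false) ->
  (forall e, c1 (iota1 e) \/ iota1 e = h1 (p1 (iota1 e))) ->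
  range h1 = c1 @^-1` [set false].
Proof.
move=> ch cp cc c_h gens; have [[_ _ [_ hausF] _ _] _ _] := freeF.
have [[_ _ c_comp] _ c_cont] := cc.
have [[_ _ hp_comp] _ hp_cont] := cont_hom_comp cp ch.
pose K := [set x | c1 x \/ x = h1 (p1 x)].
have closedK : closed K.
  apply: closedU; first exact: (continuous_closedP _).1 c_cont _ (discrete_closed _).
  exact: closed_fixed_points hausF hp_cont.
have compK : comp_closed K.
  move=> x y Kx Ky xy; have c_xy := c_comp x y xy; rewrite /= in c_xy.
  case: Kx => [cx | fix_x]; first by left; rewrite c_xy cx.
  case: Ky => [cy | fix_y]; first by left; rewrite c_xy cy orbT.
  by right; have /= -> := hp_comp x y xy; rewrite -fix_x -fix_y.
have allK := free_proV_closed_subsgdT closedK compK gens.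
apply/seteqP; split=> [_ [y _ <-] | x /= cx]; first exact: c_h.
have : K x by rewrite allK.
by case=> [| ->]; [rewrite cx | exists (p1 x)].
Qed.

End FreeProV.

Theorem mainTheorem7
  (V : fsgd -> Prop) (HV : pseudovariety V) (HSl : contains_Sl V)
  (A B : fvgraph) (i0 : gV B -> gV A) (i1 : gE B -> gE A)
  (HBA : subgraph_incl i0 i1)
  (r0 : gV A -> gV B) (r1 : gE A -> gE B) (Hret : retraction i0 i1 r0 r1)
  (FA : tsgd) (iA0 : gV A -> tO FA) (iA1 : gE A -> tX FA) (HFA : free_proV V iA0 iA1)
  (FB : tsgd) (iB0 : gV B -> tO FB) (iB1 : gE B -> tX FB) (HFB : free_proV V iB0 iB1)
  (h0 : tO FB -> tO FA) (h1 : tX FB -> tX FA) (Hh : cont_hom h0 h1)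
  (Hh0 : forall v, h0 (iB0 v) = iA0 (i0 v)) (Hh1 : forall e, h1 (iB1 e) = iA1 (i1 e)) :
  open (range h1).
Proof.
(* From V only the two-element semilattice is used. *)
have [pB [iB_src iB_tgt] _] := HFB; have pBool := proV_bool_or HSl.
have [[r_src r_tgt] _ _ _ ri1] := Hret.
have retr : graph_to_sgd (S := FB) (iB0 \o r0) (iB1 \o r1).
  by split=> e /=; rewrite ?iB_src ?iB_tgt ?r_src ?r_tgt.
have [p0 [p1 [cp _ p1E]]] := free_proV_lift HFA pB retr.
pose outside e := `[< ~ exists d, i1 d = e >].
have content : graph_to_sgd (S := bool_or) (fun=> tt) outside by [].
have [c0 [c1 [cc _ c1E]]] := free_proV_lift HFA pBool content.
have c_h : forall y, c1 (h1 y) = false.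
  move=> y; suff /(congr1 (@^~ y)) : c1 \o h1 = fun=> false by [].
  apply: (free_proV_hom_eq HFB pBool (cont_hom_comp Hh cc) (cont_hom_false FB)).
    by move=> v /=; case: (c0 (h0 (iB0 v)) : unit).
  by move=> e; rewrite /= Hh1 c1E; apply/asboolPn; apply; exists e.
rewrite (range_eq_preimage_content HFA Hh cp cc c_h).
  by have [_ _ c_cont] := cc; exact: (continuousP _).1 c_cont _ (discrete_open _).
move=> e; have [[d <-] | out] := pselect (exists d, i1 d = e).
  by right; rewrite p1E /= ri1 Hh1.
by left; rewrite c1E; apply/asboolP.
Qed.
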